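(* Let $P_1,P_2,N>0$. If $\sigma_1^2\ge P_1\big(\frac32+\frac{P_2}{N}\big)$ and $\sigma_2^2\ge P_2\big(\frac32+\frac{P_1}{N}\big)$, then $\mathcal R_{\mathrm{Car}}(P_1,P_2,N,\sigma_1^2,\sigma_2^2)=\mathcal C_{\mathrm{MAC}}(P_1,P_2,N)$.
   Context: Notation: for $x\in[0,1]$, $\bar x=1-x$; $L(a,b)=\frac12\log(1+\frac ab)$; and $G=\bar\alpha_1P_1+\bar\alpha_2P_2+2\sqrt{\bar\alpha_1\bar\alpha_2P_1P_2}$, $H=N+\alpha_1P_1+\alpha_2P_2$. The region $\mathcal R_{\mathrm{Car}}(P_1,P_2,N,\sigma_1^2,\sigma_2^2)$ (for $\sigma_1^2,\sigma_2^2\ge0$) is the set of pairs $(R_1,R_2)$ for which there exist nonnegative $R_{1,0},R_{1,1}$ with $R_{1,0}+R_{1,1}=R_1$, nonnegative $R_{2,0},R_{2,2}$ with $R_{2,0}+R_{2,2}=R_2$, and $\alpha_1,\alpha_2,\beta_1,\beta_2,\upsilon\in[0,1]$ such that: $R_{1,0}\le L(\alpha_1\bar\beta_1P_1,\ \alpha_1\beta_1P_1+N+\sigma_2^2)$; $R_{2,0}\le L(\alpha_2\bar\beta_2P_2,\ \alpha_2\beta_2P_2+N+\sigma_1^2)$; $R_{1,1}\le L(\alpha_1\beta_1P_1,N)$; $R_{2,2}\le L(\alpha_2\beta_2P_2,N)$; $R_{1,0}+R_{2,0}\le L(\alpha_1\bar\beta_1P_1+\alpha_2\bar\beta_2P_2,N)+L(G,H)$;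 $R_{1,0}+R_{2,2}\le L(\alpha_1\bar\beta_1P_1+\alpha_2\beta_2P_2,N)+L(\upsilon G,H)$; $R_{2,0}+R_{1,1}\le L(\alpha_1\beta_1P_1+\alpha_2\bar\beta_2P_2,N)+L(\bar\upsilon G,H)$; $R_{1,1}+R_{2,2}\le L(\alpha_1\beta_1P_1+\alpha_2\beta_2P_2,N)$; $R_1+R_{2,0}\le L(\alpha_1P_1+\alpha_2\bar\beta_2P_2,N)+L(G,H)$; $R_{1,0}+R_2\le L(\alpha_1\bar\beta_1P_1+\alpha_2P_2,N)+L(G,H)$; $R_1+R_{2,2}\le L(\alpha_1P_1+\alpha_2\beta_2P_2,N)+L(\upsilon G,H)$; $R_{1,1}+R_2\le L(\alpha_1\beta_1P_1+\alpha_2P_2,N)+L(\bar\upsilon G,H)$; $R_1+R_2\le L(P_1+P_2+2\sqrt{\bar\alpha_1\bar\alpha_2P_1P_2},N)$. The no-feedback capacity region $\mathcal C_{\mathrm{MAC}}(P_1,P_2,N)$ is the set of nonnegative $(R_1,R_2)$ with $R_1\le\frac12\log(1+\frac{P_1}{N})$, $R_2\le\frac12\log(1+\frac{P_2}{N})$, $R_1+R_2\le\frac12\log(1+\frac{P_1+P_2}{N})$. *)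

From Stdlib Require Import Reals.
Open Scope R_scope.

Definition bar (x : R) : R := 1 - x.

(* L(a,b) = 1/2 log(1 + a/b); natural logarithm (base is a global scaling,
   and the same convention is used in both regions). *)
Definition L (a b : R) : R := / 2 * ln (1 + a / b).

Definition Gc (P1 P2 a1 a2 : R) : R :=
  bar a1 * P1 + bar a2 * P2 + 2 * sqrt (bar a1 * bar a2 * P1 * P2).

Definition Hc (P1 P2 N a1 a2 : R) : R := N + a1 * P1 + a2 * P2.

Definition in01 (x : R) : Prop := 0 <= x <= 1.

Definition R_Car (P1 P2 N s1 s2 : R) (R1 R2 : R) : Prop :=
  exists R10 R11 R20 R22 a1 a2 b1 b2 u : R,
    0 <= R10 /\ 0 <= R11 /\ R10 + R11 = R1 /\
    0 <= R20 /\ 0 <= R22 /\ R20 + R22 = R2 /\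
    in01 a1 /\ in01 a2 /\ in01 b1 /\ in01 b2 /\ in01 u /\
    let G := Gc P1 P2 a1 a2 in
    let H := Hc P1 P2 N a1 a2 in
    R10 <= L (a1 * bar b1 * P1) (a1 * b1 * P1 + N + s2) /\
    R20 <= L (a2 * bar b2 * P2) (a2 * b2 * P2 + N + s1) /\
    R11 <= L (a1 * b1 * P1) N /\
    R22 <= L (a2 * b2 * P2) N /\
    R10 + R20 <= L (a1 * bar b1 * P1 + a2 * bar b2 * P2) N + L G H /\
    R10 + R22 <= L (a1 * bar b1 * P1 + a2 * b2 * P2) N + L (u * G) H /\
    R20 + R11 <= L (a1 * b1 * P1 + a2 * bar b2 * P2) N + L (bar u * G) H /\
    R11 + R22 <= L (a1 * b1 * P1 + a2 * b2 * P2) N /\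
    R1 + R20 <= L (a1 * P1 + a2 * bar b2 * P2) N + L G H /\
    R10 + R2 <= L (a1 * bar b1 * P1 + a2 * P2) N + L G H /\
    R1 + R22 <= L (a1 * P1 + a2 * b2 * P2) N + L (u * G) H /\
    R11 + R2 <= L (a1 * b1 * P1 + a2 * P2) N + L (bar u * G) H /\
    R1 + R2 <= L (P1 + P2 + 2 * sqrt (bar a1 * bar a2 * P1 * P2)) N.

Definition C_MAC (P1 P2 N : R) (R1 R2 : R) : Prop :=
  0 <= R1 /\ 0 <= R2 /\
  R1 <= / 2 * ln (1 + P1 / N) /\
  R2 <= / 2 * ln (1 + P2 / N) /\
  R1 + R2 <= / 2 * ln (1 + (P1 + P2) / N).

From Stdlib Require Import Reals Lra Psatz.
Open Scope R_scope.

(* Both regions are cut out by bounds of the form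
   L a b = 1/2 ln ((b + a) / b), so sums of such terms are half-logarithms
   of products of "gains" (b + a) / b, and comparing them reduces to
   polynomial inequalities.
   - C_MAC is contained in R_Car: send everything as private messages
     (alpha_i = beta_i = 1, upsilon = 0); the common-message terms vanish and
     the remaining constraints of R_Car are exactly those of C_MAC.
   - R_Car is contained in C_MAC: only the constraints on R_{1,0}, R_{2,0},
     R_{1,1}, R_{2,2} and R_{1,1} + R_{2,2} are needed.  The single-user
     bound R_i <= L(P_i, N) holds for any interference level, and the
     sum-rate bound R_1 + R_2 <= L(P_1 + P_2, N) holds as soon as each
     interference term sigma_j^2 dominates the other user's power P_i,
     which the hypotheses of the theorem imply. *)

Lemma L_gain (a b : R) : 0 < b -> L a b = / 2 * ln ((b + a) / b).
Proof. intros Hb. unfold L. f_equal. f_equal. field. lra. Qed.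

Lemma L_zero (b : R) : L 0 b = 0.
Proof. unfold L, Rdiv. rewrite Rmult_0_l, Rplus_0_r, ln_1. ring. Qed.

(* Rates add by multiplying gains: (b+a)/b * (d+c)/d = (bd + a')/(bd). *)
Lemma L_add (a b c d : R) : 0 < b -> 0 < d -> 0 <= a -> 0 <= c ->
  L a b + L c d = L ((b + a) * (d + c) - b * d) (b * d).
Proof.
  intros Hb Hd Ha Hc.
  assert (Hbd : 0 < b * d) by nra.
  rewrite !L_gain by assumption.
  rewrite <- Rmult_plus_distr_l, <- ln_mult
    by (apply Rdiv_lt_0_compat; lra).
  f_equal. f_equal. field. lra.
Qed.

Lemma L_le (a b e f : R) : 0 < b -> 0 < f -> 0 <= a ->
  (b + a) * f <= (f + e) * b -> L a b <= L e f.
Proof.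
  intros Hb Hf Ha Hgain.
  rewrite !L_gain by assumption.
  apply Rmult_le_compat_l; [lra |].
  assert (Hpos : 0 < (b + a) / b) by (apply Rdiv_lt_0_compat; lra).
  assert (Hratio : (b + a) / b <= (f + e) / f).
  { apply Rmult_le_reg_r with (b * f); [nra |].
    unfold Rdiv.
    replace ((b + a) * / b * (b * f)) with ((b + a) * f) by (field; lra).
    replace ((f + e) * / f * (b * f)) with ((f + e) * b) by (field; lra).
    exact Hgain. }
  destruct Hratio as [Hlt | Heq].
  - left. apply ln_increasing; assumption.
  - rewrite Heq. lra.
Qed.

Lemma power_split (a b P : R) : in01 a -> in01 b -> 0 <= P ->
  0 <= a * b * P <= a * P /\ a * P <= P /\ a * bar b * P = a * P - a * b * P.
Proof.
  unfold in01, bar. intros Ha Hb HP.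
  assert (0 <= a * P) by nra.
  repeat split; nra.
Qed.

Lemma single_user_bound (N P A x s : R) :
  0 < N -> 0 <= x <= A -> A <= P -> 0 <= s ->
  L (A - x) (x + N + s) + L x N <= L P N.
Proof.
  intros HN Hx HA Hs.
  rewrite L_add by lra.
  apply L_le; [nra | lra | nra |].
  (* Gain inequality, with slack (P - A)(N + x) + s(P - x) >= 0. *)
  assert (0 <= (P - A) * (N + x)) by nra.
  assert (0 <= s * (P - x)) by nra.
  nra.
Qed.

Lemma sum_rate_poly_full (N P1 P2 s1 s2 x1 x2 : R) :
  0 < N -> 0 <= x1 <= P1 -> 0 <= x2 <= P2 -> s1 >= P1 -> s2 >= P2 ->
  (N + P1 + s2) * (N + P2 + s1) * (N + x1 + x2)
  <= (N + P1 + P2) * (N + x1 + s2) * (N + x2 + s1).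
Proof.
  intros HN H1 H2 Hs1 Hs2.
  set (d1 := P1 - x1). set (d2 := P2 - x2).
  set (A := N + x1 + s2). set (B := N + x2 + s1). set (T := N + x1 + x2).
  assert (Hdiff : (N + P1 + P2) * A * B - (N + P1 + s2) * (N + P2 + s1) * T
                  = d1 * (B * (s2 - x2) - T * d2 / 2)
                    + d2 * (A * (s1 - x1) - T * d1 / 2)).
  { unfold d1, d2, A, B, T. field. }
  assert (Hc1 : 0 <= B * (s2 - x2) - T * d2 / 2).
  { assert (T <= B /\ 0 <= T) by (unfold T, B; lra).
    assert (0 <= d2 / 2 <= s2 - x2) by (unfold d2; lra).
    nra. }
  assert (Hc2 : 0 <= A * (s1 - x1) - T * d1 / 2).
  { assert (T <= A /\ 0 <= T) by (unfold T, A; lra).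
    assert (0 <= d1 / 2 <= s1 - x1) by (unfold d1; lra).
    nra. }
  assert (0 <= d1 /\ 0 <= d2) by (unfold d1, d2; lra).
  nra.
Qed.

(* The gain inequality of the sum-rate bound for arbitrary total powers
   A_i <= P_i, reduced to full powers by monotonicity in A_i. *)
Lemma sum_rate_poly (N P1 P2 s1 s2 A1 A2 x1 x2 : R) :
  0 < N -> 0 <= x1 <= A1 -> A1 <= P1 -> 0 <= x2 <= A2 -> A2 <= P2 ->
  s1 >= P1 -> s2 >= P2 ->
  (N + s2 + A1) * (N + s1 + A2) * (N + x1 + x2)
  <= (N + P1 + P2) * (N + x1 + s2) * (N + x2 + s1).
Proof.
  intros HN Hx1 HA1 Hx2 HA2 Hs1 Hs2.
  apply Rle_trans with ((N + P1 + s2) * (N + P2 + s1) * (N + x1 + x2)).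
  - apply Rmult_le_compat_r; [lra |].
    apply Rmult_le_compat; lra.
  - apply sum_rate_poly_full; lra.
Qed.

Lemma sum_rate_bound (N P1 P2 s1 s2 A1 A2 x1 x2 : R) :
  0 < N -> 0 <= x1 <= A1 -> A1 <= P1 -> 0 <= x2 <= A2 -> A2 <= P2 ->
  s1 >= P1 -> s2 >= P2 ->
  L (A1 - x1) (x1 + N + s2) + L (A2 - x2) (x2 + N + s1) + L (x1 + x2) N
  <= L (P1 + P2) N.
Proof.
  intros HN Hx1 HA1 Hx2 HA2 Hs1 Hs2.
  pose proof (sum_rate_poly N P1 P2 s1 s2 A1 A2 x1 x2) as Hpoly.
  assert (Hb1 : 0 < x1 + N + s2) by lra.
  assert (Hb2 : 0 < x2 + N + s1) by lra.
  assert (Hprod : 0 < (x1 + N + s2) * (x2 + N + s1)) by nra.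
  assert (Hgain12 : 0 <= (x1 + N + s2 + (A1 - x1)) * (x2 + N + s1 + (A2 - x2))
                         - (x1 + N + s2) * (x2 + N + s1)) by nra.
  rewrite L_add by lra.
  rewrite L_add by lra.
  apply L_le; [nra | lra | nra |].
  assert (Hscaled :
    (N + s2 + A1) * (N + s1 + A2) * (N + x1 + x2) * N
    <= (N + P1 + P2) * (N + x1 + s2) * (N + x2 + s1) * N).
  { apply Rmult_le_compat_r; [lra | apply Hpoly; lra]. }
  nra.
Qed.

Lemma R_Car_sub_C_MAC (P1 P2 N s1 s2 R1 R2 : R) :
  0 < P1 -> 0 < P2 -> 0 < N -> s1 >= P1 -> s2 >= P2 ->
  R_Car P1 P2 N s1 s2 R1 R2 -> C_MAC P1 P2 N R1 R2.
Proof.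
  intros HP1 HP2 HN Hs1 Hs2 Hcar.
  destruct Hcar as (R10 & R11 & R20 & R22 & a1 & a2 & b1 & b2 & u &
    h10 & h11 & e1 & h20 & h22 & e2 & ia1 & ia2 & ib1 & ib2 & _ &
    c10 & c20 & c11 & c22 & _ & _ & _ & c1122 & _).
  destruct (power_split a1 b1 P1 ia1 ib1 ltac:(lra)) as (Hx1 & HA1 & E1).
  destruct (power_split a2 b2 P2 ia2 ib2 ltac:(lra)) as (Hx2 & HA2 & E2).
  rewrite E1 in c10. rewrite E2 in c20.
  pose proof (single_user_bound N P1 (a1 * P1) (a1 * b1 * P1) s2
                HN Hx1 HA1 ltac:(lra)).
  pose proof (single_user_bound N P2 (a2 * P2) (a2 * b2 * P2) s1
                HN Hx2 HA2 ltac:(lra)).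
  pose proof (sum_rate_bound N P1 P2 s1 s2 (a1 * P1) (a2 * P2)
                (a1 * b1 * P1) (a2 * b2 * P2) HN Hx1 HA1 Hx2 HA2 Hs1 Hs2).
  unfold C_MAC; fold (L P1 N) (L P2 N) (L (P1 + P2) N).
  repeat split; lra.
Qed.

Lemma bar_one : bar 1 = 0.
Proof. unfold bar. ring. Qed.

Lemma Gc_private (P1 P2 : R) : Gc P1 P2 1 1 = 0.
Proof. unfold Gc. rewrite bar_one, !Rmult_0_l, sqrt_0. ring. Qed.

Lemma C_MAC_sub_R_Car (P1 P2 N s1 s2 R1 R2 : R) :
  C_MAC P1 P2 N R1 R2 -> R_Car P1 P2 N s1 s2 R1 R2.
Proof.
  intros (h1 & h2 & c1 & c2 & c12).
  fold (L P1 N) (L P2 N) (L (P1 + P2) N) in c1, c2, c12.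
  exists 0, R1, 0, R2, 1, 1, 1, 1, 0.
  cbv zeta. rewrite Gc_private, bar_one.
  repeat (rewrite Rmult_0_l || rewrite Rmult_0_r || rewrite Rmult_1_l
          || rewrite Rplus_0_l || rewrite Rplus_0_r || rewrite sqrt_0
          || rewrite L_zero).
  unfold in01. repeat split; lra.
Qed.

Lemma interference_dominates (P Q N s : R) :
  0 < P -> 0 < Q -> 0 < N -> s >= P * (3 / 2 + Q / N) -> s >= P.
Proof.
  intros HP HQ HN Hs.
  assert (0 < P * (Q / N)) by (apply Rmult_lt_0_compat; [lra | apply Rdiv_lt_0_compat; lra]).
  lra.
Qed.

Theorem mainTheorem13 (P1 P2 N s1 s2 : R) :
  0 < P1 -> 0 < P2 -> 0 < N ->
  0 <= s1 -> 0 <= s2 ->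
  s1 >= P1 * (3 / 2 + P2 / N) ->
  s2 >= P2 * (3 / 2 + P1 / N) ->
  forall R1 R2 : R, R_Car P1 P2 N s1 s2 R1 R2 <-> C_MAC P1 P2 N R1 R2.
Proof.
  intros HP1 HP2 HN _ _ Hc1 Hc2 R1 R2.
  pose proof (interference_dominates P1 P2 N s1 HP1 HP2 HN Hc1).
  pose proof (interference_dominates P2 P1 N s2 HP2 HP1 HN Hc2).
  split.
  - apply R_Car_sub_C_MAC; assumption.
  - apply C_MAC_sub_R_Car.
Qed.
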